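(* There is an absolute constant $c>0$ such that for every integer $k\ge 2$, every strict subdivision of a graph of average degree at least $c\,k\log k$ contains, as an induced subgraph, a disjoint union of $k$ cycles (i.e., it is not $\mathcal{O}_k$-free).
   Context: All graphs are finite and simple. A strict subdivision of a graph $H$ is a graph obtained from $H$ by replacing each edge by a path with at least two edges (each edge is subdivided at least once), the new paths being internally disjoint. A graph $G$ is $\mathcal{O}_k$-free if it has no induced subgraph isomorphic to a disjoint union of $k$ cycles. *)

From Stdlib Require Import Reals.
From mathcomp Require Import all_boot.

Set Implicit Arguments.
Unset Strict Implicit.
Unset Printing Implicit Defensive.

Definition simple_graph (V : finType) (e : rel V) : Prop :=
  (forall x y, e x y = e y x) /\ (forall x, ~~ e x x).

Definition deg (V : finType) (e : rel V) (x : V) : nat := #|[set y | e x y]|.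

(* average degree = (sum of degrees) / |V|  (= 2|E|/|V|); 0 on the empty graph *)
Definition avg_degree (V : finType) (e : rel V) : R :=
  Rdiv (INR (\sum_(x : V) deg e x)) (INR #|V|).

(* G (edge relation eG) is a strict subdivision of H (edge relation eH):
   branch vertices f w for w in V(H); for each edge uv of H a path
   f u, P u v, f v in G with at least one internal vertex (>= 2 edges);
   internal vertices are distinct, avoid branch vertices, and are not shared
   between paths of different edges; G consists exactly of these paths. *)
Definition strict_subdivision (VH VG : finType) (eH : rel VH) (eG : rel VG) : Prop :=
  exists (f : VH -> VG) (P : VH -> VH -> seq VG),
    injective f /\
        (forall u v, eH u v -> P v u = rev (P u v)) /\
        (forall u v, eH u v -> P u v != [::]) /\
        (forall u v, eH u v -> uniq (P u v)) /\
        (forall u v x, eH u v -> x \in P u v -> forall w, f w != x) /\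
        (forall u v u' v' x, eH u v -> eH u' v' -> x \in P u v -> x \in P u' v' ->
            (u = u' /\ v = v') \/ (u = v' /\ v = u')) /\
        (forall x : VG, (exists w, f w = x) \/ (exists u v, eH u v /\ x \in P u v)) /\
        (forall x y : VG, eG x y <->
            exists u v, eH u v /\
              exists s1 s2, f u :: rcons (P u v) (f v) = s1 ++ x :: y :: s2).

Definition induces_cycle (V : finType) (e : rel V) (s : seq V) : Prop :=
  [/\ uniq s, 3 <= size s &
      forall x y, x \in s -> y \in s -> e x y = (next s x == y) || (next s y == x)].

Definition has_induced_k_cycles (V : finType) (e : rel V) (k : nat) : Prop :=
  exists C : 'I_k -> seq V,
    (forall i, induces_cycle e (C i)) /\
    (forall i j, i != j -> forall x y, x \in C i -> y \in C j -> x != y /\ ~~ e x y).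

(* Since ln k >= ln 2, average degree at least (6 / ln 2) k ln k is at least 6k.
   A shortest cycle C sees at most three neighbours of any vertex (a fourth one
   would yield a shortcut), so deleting C from a vertex set W destroys at most
   6|W| of the ordered adjacent pairs inside W.  As 2|W| such pairs already force
   a cycle in W, deleting shortest cycles k times leaves k vertex-disjoint cycles
   of H.  In a strict subdivision G of H every edge of G lies on the path
   replacing a single edge of H, and each such path has an interior vertex; hence
   the subdivisions of these cycles are induced cycles of G, pairwise disjoint
   and with no edges between them. *)

From Stdlib Require Import Reals Lra.
From mathcomp Require Import all_boot zify.

Set Implicit Arguments.
Unset Strict Implicit.
Unset Printing Implicit Defensive.

Section CyclesInSets.
Variables (V : finType) (e : rel V).
Hypotheses (e_sym : symmetric e) (e_irr : irreflexive e).
Implicit Types (W : {set V}) (s t c p q : seq V) (x y z : V).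

Definition arcs (W : {set V}) : nat := \sum_(x in W) \sum_(y in W) e x y.

Definition graph_cycle (s : seq V) : bool := [&& uniq s, 2 < size s & cycle e s].

Definition cycle_in (W : {set V}) (s : seq V) : bool := graph_cycle s && all [in W] s.

Lemma arcs_setD (W D : {set V}) : D \subset W ->
  arcs W <= arcs (W :\: D) + 2 * \sum_(y in W) \sum_(x in D) e y x.
Proof.
move=> sDW; rewrite /arcs [in X in X <= _](big_setID D) /= (setIidPr sDW).
have inner x : \sum_(y in W) (e x y : nat) =
    \sum_(y in D) (e x y : nat) + \sum_(y in W :\: D) (e x y : nat).
  by rewrite (big_setID D) /= (setIidPr sDW).
rewrite [X in _ + X](eq_bigr _ (fun x _ => inner x)) big_split /=.
have -> : \sum_(x in D) \sum_(y in W) (e x y : nat) =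
          \sum_(y in W) \sum_(x in D) (e y x : nat).
  by rewrite exchange_big; apply: eq_bigr => y _; apply: eq_bigr => x _; rewrite e_sym.
have : \sum_(x in W :\: D) \sum_(y in D) (e x y : nat) <=
       \sum_(x in W) \sum_(y in D) (e x y : nat).
  by rewrite [X in _ <= X](big_setID D) /= leq_addl.
lia.
Qed.

Lemma sum_mem_count (P : pred V) (s : seq V) :
  uniq s -> \sum_(x in [set z in s]) (P x : nat) = count P s.
Proof.
move=> us; rewrite (eq_bigl [in s]) => [|x]; last by rewrite inE.
rewrite -big_uniq //; elim: {us}s => [|x s IHs]; first by rewrite big_nil.
by rewrite big_cons IHs.
Qed.

Lemma graph_cycle_chord y a p :
  uniq (y :: a :: p) -> p != [::] -> path e a p -> e y a -> e y (last a p) ->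
  graph_cycle (y :: a :: p).
Proof.
move=> u p0 pp ya yl; rewrite /graph_cycle u /= rcons_path ya pp e_sym yl.
by case: (p) p0.
Qed.

Lemma graph_cycle_sorted s : graph_cycle s -> sorted e s.
Proof. by case/and3P=> _ _; case: s => //= a s; rewrite rcons_path => /andP []. Qed.

Lemma graph_cycle_next s x : graph_cycle s -> x \in s -> e x (next s x).
Proof. by case/and3P=> _ _ cs xs; apply: next_cycle. Qed.

Lemma shortcut_cycle y t :
  uniq t -> y \notin t -> sorted e t -> 3 < count (e y) t ->
  exists c, [/\ graph_cycle c, size c < size t & {subset c <= y :: t}].
Proof.
move=> + + + ct; have ht : has (e y) t by rewrite has_count; lia.
move: ct; case: (split_find ht) => a t0 r ya; rewrite has_count -leqNgt => t0F ct.
rewrite count_cat -cats1 count_cat /= ya /= in ct.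
have hr : has (e y) r by rewrite has_count; lia.
move: ct; case: (split_find hr) => b r1 r' yb; rewrite has_count -leqNgt => r1F ct.
rewrite count_cat -cats1 count_cat /= yb /= in ct.
rewrite cat_rcons => ut yt st; have sub := infix_infix t0 (a :: rcons r1 b) r'.
have := count_size (e y) r'; rewrite !size_cat /= size_cat size_rcons => sr'.
exists (y :: a :: rcons r1 b); split=> /=.
- apply: graph_cycle_chord; rewrite ?last_rcons //.
  + rewrite cons_uniq (subseq_uniq (infixW sub)) // andbT.
    by apply: contra yt; apply: (mem_subseq (infixW sub)).
  + by case: (r1).
  + by have := infix_sorted sub st.
- rewrite size_rcons; lia.
- move=> z; rewrite inE => /orP [/eqP ->|zc]; first by rewrite inE eqxx.
  by rewrite inE (mem_subseq (infixW sub) zc) orbT.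
Qed.

Lemma shortest_cycle_in W s : cycle_in W s ->
  exists2 c, cycle_in W c & forall t, cycle_in W t -> size c <= size t.
Proof.
move=> Ws; have exP : exists n, [exists t : n.-tuple V, cycle_in W t].
  by exists (size s); apply/existsP; exists (in_tuple s).
case: (ex_minnP exP) => n /existsP [c Wc] minc; exists (val c) => // t Wt.
by rewrite size_tuple; apply: minc; apply/existsP; exists (in_tuple t).
Qed.

Lemma count_adj_shortest_cycle W s y :
  cycle_in W s -> (forall t, cycle_in W t -> size s <= size t) -> y \in W ->
  count (e y) s <= 3.
Proof.
move=> /andP [cs /allP sW] mins yW; rewrite leqNgt; apply/negP => ct.
have [t [ut yt st ts cnt]] : exists t, [/\ uniq t, y \notin t, sorted e t,
    {subset t <= s} & count (e y) s = count (e y) t].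
  case/and3P: (cs) => us _ ccs; case: (boolP (y \in s)) => [ys|yNs]; last first.
    by exists s; split=> //; apply: graph_cycle_sorted.
  have := rot_index ys; set t := drop _ _ ++ _ => rs.
  have : uniq (rot (index y s) s) by rewrite rot_uniq.
  have : cycle e (rot (index y s) s) by rewrite rot_cycle.
  have := mem_rot (index y s) s.
  have /permP cnt : perm_eq (rot (index y s) s) s by rewrite perm_rot.
  rewrite -(cnt (e y)) rs /= e_irr /= rcons_path => mem_t /andP [/path_sorted st _].
  case/andP=> yt ut; exists t; split=> //.
  by move=> z zt; rewrite -mem_t inE zt orbT.
rewrite cnt in ct; have [c [gc sc cyt]] := shortcut_cycle ut yt st ct.
have : size s <= size c.
  apply: mins; rewrite /cycle_in gc; apply/allP => z /cyt.
  by rewrite inE => /orP [/eqP -> //|/ts /sW].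
by rewrite leqNgt (leq_trans sc (uniq_leq_size ut ts)).
Qed.

Lemma cycle_in_subset W W' c : W' \subset W -> cycle_in W' c -> cycle_in W c.
Proof.
move=> sW /andP [gc /allP cW]; rewrite /cycle_in gc; apply/allP => z zc.
exact: (subsetP sW _ (cW z zc)).
Qed.

Lemma cycle_of_saturated_path W x q :
  1 < \sum_(y in W) e x y -> uniq (x :: q) -> all [in W] (x :: q) ->
  path e x q -> {in W, forall y, e x y -> y \in q} -> exists c, cycle_in W c.
Proof.
move=> degx uxq /allP xqW pxq Nx.
have : \sum_(y in W) (e x y : nat) <= count (e x) q.
  rewrite -sum_mem_count; last by case/andP: uxq.
  rewrite big_mkcond [X in _ <= X]big_mkcond /=; apply: leq_sum => y _.
  by rewrite inE; case: (boolP (y \in W)) => // yW; case: (boolP (e x y)) => // /(Nx y yW) ->.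
case: q uxq xqW pxq {Nx} => [|b q] //=; first lia.
move=> uxq xqW /andP [xb pbq] cnt.
have hq : has (e x) q by rewrite has_count; move: cnt; case: (e x b) => /=; lia.
move: uxq xqW pbq; case: (split_find hq) => z m1 m2 xz _.
rewrite cat_path -!cat_cons => uxq xqW /andP [pbm _].
have sub := prefix_subseq [:: x, b & rcons m1 z] m2.
exists [:: x, b & rcons m1 z]; apply/andP; split.
  apply: graph_cycle_chord => //; rewrite ?last_rcons //.
    exact: subseq_uniq sub uxq.
  by case: (m1).
by apply/allP => y /(mem_subseq sub) /xqW.
Qed.

Definition path_in W (p : seq V) : bool := [&& uniq p, all [in W] p & sorted e p].

Lemma cycle_in_of_min_degree W :
  W != set0 -> {in W, forall x, 1 < \sum_(y in W) e x y} -> exists c, cycle_in W c.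
Proof.
(* The first vertex of a longest path in W has all its neighbours in W on the path. *)
case/set0Pn=> x0 x0W mindeg.
pose P n := (0 < n) && [exists p : n.-tuple V, path_in W p].
have P1 : P 1 by apply/existsP; exists [tuple x0]; rewrite /path_in /= x0W.
have Pub n : P n -> n <= #|V|.
  case/andP=> _ /existsP [p /and3P [up _ _]].
  by rewrite -(size_tuple p) -(card_uniqP up) max_card.
case: (ex_maxnP (ex_intro _ 1 P1) Pub) => n /andP [n0 /existsP [p]].
case: p => [[|x q] //= sz]; first by move: n0; rewrite -(eqP sz).
case/and3P=> uxq xqW; rewrite /= => pxq maxn.
apply: (cycle_of_saturated_path (mindeg x _) uxq xqW pxq) => [|y yW xy].
  by case/andP: xqW.
apply/negPn/negP => yNq.
have : P (size [:: y, x & q]).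
  apply/existsP; exists (in_tuple [:: y, x & q]).
  apply/and3P; split.
  - rewrite cons_uniq uxq inE negb_or yNq !andbT.
    by apply/eqP => yx; move: xy; rewrite yx e_irr.
  - by apply/allP => z; rewrite inE => /orP [/eqP -> //|]; apply/allP.
  - by rewrite [sorted _ _]/= e_sym xy.
by move/maxn; rewrite -(eqP sz) /= ltnn.
Qed.

Lemma arcs_set1 x : arcs [set x] = 0.
Proof. by rewrite /arcs !big_set1 e_irr. Qed.

Lemma cycle_in_of_arcs W : W != set0 -> 2 * #|W| <= arcs W -> exists c, cycle_in W c.
Proof.
have [m ltWm] := ubnP #|W|; elim: m W ltWm => // m IHm W ltWm W0 aW.
have [/existsP [v /andP [vW degv]] | ] := boolP [exists v in W, \sum_(y in W) e v y < 2].
  have degv' : \sum_(y in W) \sum_(x in [set v]) (e y x : nat) < 2.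
    by under eq_bigr => y _ do rewrite big_set1 e_sym.
  have := arcs_setD (W := W) (D := [set v]); rewrite sub1set vW => /(_ isT) aWv.
  have cW := cardsD1 v W; rewrite vW /= in cW.
  have [W'0 | W'0] := eqVneq (W :\ v) set0.
    by move: aW; rewrite -(setD1K vW) W'0 setU0 arcs_set1 cards1.
  have [c Wc] : exists c, cycle_in (W :\ v) c by apply: IHm => //; lia.
  by exists c; apply: cycle_in_subset Wc; apply: subsetDl.
rewrite negb_exists => /forallP mindeg; apply: cycle_in_of_min_degree W0 _ => x xW.
by have := mindeg x; rewrite xW /= -leqNgt.
Qed.

Lemma shortest_cycle_of_arcs W : W != set0 -> 2 * #|W| <= arcs W ->
  exists2 s, cycle_in W s & forall t, cycle_in W t -> size s <= size t.
Proof. by move=> W0 /(cycle_in_of_arcs W0) [c /shortest_cycle_in]. Qed.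

Lemma arcs_setD_shortest_cycle W s :
  cycle_in W s -> (forall t, cycle_in W t -> size s <= size t) ->
  arcs W <= arcs (W :\: [set z in s]) + 6 * #|W|.
Proof.
move=> Ws mins; have /andP [/and3P [us _ _] /allP sW] := Ws.
have sD : [set z in s] \subset W by apply/subsetP => z; rewrite inE => /sW.
have : \sum_(y in W) \sum_(x in [set z in s]) (e y x : nat) <= 3 * #|W|.
  rewrite mulnC -sum_nat_const; apply: leq_sum => y yW.
  by rewrite sum_mem_count //; apply: count_adj_shortest_cycle Ws mins yW.
have := arcs_setD sD; lia.
Qed.

Lemma disjoint_cycles_of_arcs k W : W != set0 -> (6 * k + 2) * #|W| <= arcs W ->
  exists cs : seq (seq V), [/\ size cs = k.+1, all (cycle_in W) cs &
    pairwise (fun c d : seq V => [disjoint c & d]) cs].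
Proof.
elim: k W => [|k IHk] W W0 aW.
  by have [s Ws] := cycle_in_of_arcs W0 aW; exists [:: s]; rewrite /= Ws.
have [s Ws mins] : exists2 s, cycle_in W s & forall t, cycle_in W t -> size s <= size t.
  by apply: shortest_cycle_of_arcs W0 _; apply: leq_trans aW; rewrite leq_mul2r; lia.
have aW' := arcs_setD_shortest_cycle Ws mins.
set W' := W :\: [set z in s] in aW'.
have leW' : #|W'| <= #|W| by apply/subset_leq_card/subsetDl.
have {}aW' : (6 * k + 2) * #|W| <= arcs W' by lia.
have W'0 : W' != set0.
  apply: contraNneq W0 => W'0; move: aW'; rewrite W'0 /arcs big_set0.
  by rewrite -cards_eq0; lia.
have [cs [szcs csW' pcs]] := IHk W' W'0 (leq_trans (leq_mul (leqnn _) leW') aW').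
exists (s :: cs); split=> /=; first by rewrite szcs.
  rewrite Ws; apply/allP => c /(allP csW'); apply: cycle_in_subset; exact: subsetDl.
rewrite pcs andbT; apply/allP => c /(allP csW') /andP [_ /allP cW'].
rewrite disjoint_sym disjoint_has; apply/hasPn => z /cW'.
by rewrite !inE => /andP [].
Qed.

End CyclesInSets.

Lemma next_cat2 (T : eqType) (s1 s2 : seq T) x y :
  uniq (s1 ++ x :: y :: s2) -> next (s1 ++ x :: y :: s2) x = y.
Proof.
case: s1 => [|a s1] u; first by rewrite /= eqxx.
rewrite next_nth mem_cat !inE eqxx !orbT.
move: u; rewrite cat_uniq => /and3P [_ /hasPn xNs1 _].
have {}xNs1 : x \notin a :: s1 by apply: xNs1; rewrite inE eqxx.
by rewrite index_cat (negbTE xNs1) /= eqxx addn0 nth_cat ltnNge leqnSn /= subSn // subnn.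
Qed.

Lemma next_rot_cat2 (T : eqType) (s s1 s2 : seq T) n x y :
  uniq s -> rot n s = s1 ++ x :: y :: s2 -> next s x = y.
Proof.
by move=> us hr; rewrite -(next_rot n us) hr next_cat2 // -hr rot_uniq.
Qed.

Lemma next_next_neq (T : eqType) (s : seq T) x :
  uniq s -> 2 < size s -> x \in s -> next s (next s x) != x.
Proof.
move=> us ss xs; have := rot_index xs; set t := drop _ _ ++ _ => rs.
have st : size t = (size s).-1 by rewrite -(size_rot (index x s) s) rs.
have : uniq (rot (index x s) s) by rewrite rot_uniq.
case: t rs st => [|a [|b t]] rs st; try by move: ss st => /=; lia.
rewrite -!(next_rot (index x s) us) rs => ur.
rewrite (next_cat2 (s1 := [::]) ur) (next_cat2 (s1 := [:: x]) ur).
case/andP: ur => xN _; apply: contraNneq xN => ->.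
by rewrite !inE eqxx orbT.
Qed.

Lemma flatten_rot (T : Type) n (ss : seq (seq T)) :
  exists m, flatten (rot n ss) = rot m (flatten ss).
Proof.
exists (size (flatten (take n ss))).
have -> : flatten ss = flatten (take n ss) ++ flatten (drop n ss).
  by rewrite -flatten_cat cat_take_drop.
by rewrite rot_size_cat /rot flatten_cat.
Qed.

Lemma uniq_flatten_map (T1 T2 : eqType) (F : T1 -> seq T2) (s : seq T1) :
  uniq s -> {in s, forall x, uniq (F x)} ->
  {in s &, forall x y, x != y -> forall z, z \in F x -> z \notin F y} ->
  uniq (flatten (map F s)).
Proof.
elim: s => [|a s IHs] //= /andP [aNs us] uF dF.
rewrite cat_uniq uF ?inE ?eqxx //=; apply/andP; split.
- apply/hasPn => z /flatten_mapP [b bs zb]; apply/negP => za.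
  have ab : a != b by apply: contraNneq aNs => ->.
  have bas : b \in a :: s by rewrite inE bs orbT.
  by move: (dF a b (mem_head _ _) bas ab z za); rewrite zb.
- apply: IHs => // [x xs | x y xs ys]; first by apply: uF; rewrite inE xs orbT.
  by apply: dF; rewrite inE ?xs ?ys orbT.
Qed.

Lemma pairwise_sym_nth (T : Type) (r : rel T) x0 (xs : seq T) i j :
  symmetric r -> pairwise r xs -> i < size xs -> j < size xs -> i != j ->
  r (nth x0 xs i) (nth x0 xs j).
Proof.
move=> r_sym /(pairwiseP x0) rxs ixs jxs.
case: (ltngtP i j) => [lt_ij | lt_ji | ->]; rewrite ?eqxx // => _.
  exact: rxs.
by rewrite r_sym; apply: rxs.
Qed.

Lemma size_flatten_map_ge (T1 T2 : Type) (F : T1 -> seq T2) (s : seq T1) :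
  (forall x, 0 < size (F x)) -> size s <= size (flatten (map F s)).
Proof. by move=> F0; elim: s => //= a s IHs; rewrite size_cat; have := F0 a; lia. Qed.

Lemma mem_rcons_consecutive (T : eqType) (q s1 s2 : seq T) b x y :
  rcons q b = s1 ++ x :: y :: s2 -> x \in q.
Proof.
elim: s1 q => [|c s1 IHs1] [|d q] //=.
- by case=> -> _; rewrite inE eqxx.
- by case=> _; case: s1 {IHs1}.
- by case=> _ /IHs1; rewrite inE => ->; rewrite orbT.
Qed.

Lemma consecutive_in_interior (T : eqType) (p s1 s2 : seq T) a b x y :
  p != [::] -> a :: rcons p b = s1 ++ x :: y :: s2 -> (x \in p) || (y \in p).
Proof.
case: s1 => [|c s1] /= p0; last by case=> _ /mem_rcons_consecutive ->.
by case: p p0 => [|d p] //= _ [_ -> _]; rewrite mem_head orbT.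
Qed.

Section SubdividedCycles.
Variables (VH VG : finType) (f : VH -> VG) (P : VH -> VH -> seq VG).

Definition subdiv_path u v : seq VG := f u :: rcons (P u v) (f v).

Definition subdiv_arc (s : seq VH) u : seq VG := f u :: P u (next s u).

Definition subdiv_cycle (s : seq VH) : seq VG := flatten (map (subdiv_arc s) s).

Lemma mem_subdiv_cycle s z :
  z \in subdiv_cycle s -> exists2 w, w \in s & (z = f w \/ z \in P w (next s w)).
Proof.
case/flatten_mapP=> w ws; rewrite inE => /orP [/eqP ->|zP]; exists w => //.
  by left.
by right.
Qed.

Lemma subdiv_cycle_branch s w : w \in s -> f w \in subdiv_cycle s.
Proof. by move=> ws; apply/flatten_mapP; exists w; rewrite // inE eqxx. Qed.

Lemma subdiv_cycle_interior s w z :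
  w \in s -> z \in P w (next s w) -> z \in subdiv_cycle s.
Proof. by move=> ws zP; apply/flatten_mapP; exists w; rewrite // inE zP orbT. Qed.

Lemma subdiv_cycle_rot s n :
  uniq s -> exists m, subdiv_cycle (rot n s) = rot m (subdiv_cycle s).
Proof.
move=> us; rewrite /subdiv_cycle map_rot.
have -> : map (subdiv_arc (rot n s)) s = map (subdiv_arc s) s.
  by apply: eq_map => x; rewrite /subdiv_arc next_rot.
exact: flatten_rot.
Qed.

Lemma subdiv_cycle_rot_path s w :
  uniq s -> 1 < size s -> w \in s -> exists m rest,
  rot m (subdiv_cycle s) = subdiv_path w (next s w) ++ rest.
Proof.
move=> us ss ws; have [m hm] := subdiv_cycle_rot (index w s) us.
have := rot_index ws; set t := drop _ _ ++ _ => rs.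
have st : size t = (size s).-1 by rewrite -(size_rot (index w s) s) rs.
case: t rs st => [|w' t] rs st; first by move: ss st => /=; lia.
have nw : next s w = w'.
  by rewrite -(next_rot (index w s) us) rs (next_cat2 (s1 := [::])) // -rs rot_uniq.
exists m, (P w' (next s w') ++ flatten (map (subdiv_arc s) t)).
have arcE : subdiv_arc (rot (index w s) s) =1 subdiv_arc s.
  by move=> x; rewrite /subdiv_arc next_rot.
by rewrite -hm /subdiv_cycle (eq_map arcE) rs /= /subdiv_arc nw /subdiv_path cat_rcons.
Qed.

End SubdividedCycles.

(* [strict_subdivision] without its covering clause, which the argument never uses. *)
Record subdivision (VH VG : finType) (eH : rel VH) (eG : rel VG)
    (f : VH -> VG) (P : VH -> VH -> seq VG) : Prop := Subdivision {
  subdiv_inj : injective f;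
  subdiv_rev : forall u v, eH u v -> P v u = rev (P u v);
  subdiv_nil : forall u v, eH u v -> P u v != [::];
  subdiv_uniq : forall u v, eH u v -> uniq (P u v);
  subdiv_branch : forall u v x, eH u v -> x \in P u v -> forall w, f w != x;
  subdiv_interior : forall u v u' v' x, eH u v -> eH u' v' ->
    x \in P u v -> x \in P u' v' -> (u = u' /\ v = v') \/ (u = v' /\ v = u');
  subdiv_edge : forall x y, eG x y <->
    exists u v, eH u v /\ exists s1 s2, subdiv_path f P u v = s1 ++ x :: y :: s2 }.

Lemma strict_subdivisionP (VH VG : finType) (eH : rel VH) (eG : rel VG) :
  strict_subdivision eH eG -> exists f P, subdivision eH eG f P.
Proof.
case=> f [P [finj [Prev [P0 [Puniq [Pf [Pint [_ Pedge]]]]]]]].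
by exists f, P; constructor.
Qed.

Section InducedSubdividedCycles.
Variables (VH VG : finType) (eH : rel VH) (eG : rel VG).
Variables (f : VH -> VG) (P : VH -> VH -> seq VG).
Hypotheses (eH_sym : symmetric eH) (eG_sym : symmetric eG).
Hypothesis sd : subdivision eH eG f P.

Local Notation subdiv_path := (subdiv_path f P).
Local Notation subdiv_cycle := (subdiv_cycle f P).

Lemma uniq_subdiv_cycle s : graph_cycle eH s -> uniq (subdiv_cycle s).
Proof.
move=> cs; have /and3P [us ss _] := cs; have eN := graph_cycle_next cs.
apply: uniq_flatten_map => // [x xs | x y xs ys xy z].
  rewrite /subdiv_arc /= (subdiv_uniq sd (eN x xs)) andbT.
  by apply/negP => fx; case/negP: (subdiv_branch sd (eN x xs) fx x).
rewrite /subdiv_arc !inE => /orP [/eqP ->|zx]; apply/negP => /orP [/eqP fy|zy].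
- by move: xy; rewrite (subdiv_inj sd fy) eqxx.
- by case/negP: (subdiv_branch sd (eN y ys) zy x).
- by case/negP: (subdiv_branch sd (eN x xs) zx y); rewrite fy.
have [[ex ey]|[ex ey]] := subdiv_interior sd (eN x xs) (eN y ys) zx zy.
  by move: xy; rewrite ex eqxx.
by case/negP: (next_next_neq us ss ys); rewrite -ex ey.
Qed.

Lemma subdiv_cycle_next_adj s x :
  graph_cycle eH s -> x \in subdiv_cycle s -> eG x (next (subdiv_cycle s) x).
Proof.
move=> cs xT; have [w ws hx] := mem_subdiv_cycle xT; have /and3P [us ss _] := cs.
have [m [rest hr]] := subdiv_cycle_rot_path f P us (ltnW ss) ws.
have xl : x \in f w :: P w (next s w).
  by case: hx => [->|h]; rewrite inE ?eqxx ?h ?orbT.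
have [p1 [p2 hp]] : exists p1 p2, f w :: P w (next s w) = p1 ++ x :: p2.
  by case/splitPr: xl => p1 p2; exists p1, p2.
set w' := next s w in hr hp.
have [y [s2 hs2]] : exists y s2, rcons p2 (f w') = y :: s2.
  by case: (p2) => [|b q]; [exists (f w'), [::] | exists b, (rcons q (f w'))].
have hL : subdiv_path w w' = p1 ++ x :: y :: s2.
  by rewrite /subdiv_path -rcons_cons hp rcons_cat /= hs2.
rewrite hL -catA in hr; rewrite (next_rot_cat2 (uniq_subdiv_cycle cs) hr).
apply/(subdiv_edge sd); exists w, w'; split; first exact: graph_cycle_next.
by exists p1, s2.
Qed.

Lemma subdiv_cycle_path_consecutive s x y u v s1 s2 :
  graph_cycle eH s -> x \in subdiv_cycle s -> eH u v -> x \in P u v ->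
  subdiv_path u v = s1 ++ x :: y :: s2 ->
  (next (subdiv_cycle s) x == y) || (next (subdiv_cycle s) y == x).
Proof.
move=> cs xT euv xP hL; have /and3P [us ss _] := cs.
have [w ws [hx|hx]] := mem_subdiv_cycle xT.
  by case/negP: (subdiv_branch sd euv xP w); rewrite hx.
have [m [rest hr]] := subdiv_cycle_rot_path f P us (ltnW ss) ws.
have eww := graph_cycle_next cs ws; have uT := uniq_subdiv_cycle cs.
have [[eu ev]|[eu ev]] := subdiv_interior sd euv eww xP hx; subst u v.
  by rewrite hL -catA in hr; rewrite (next_rot_cat2 uT hr) eqxx.
have hR : subdiv_path (next s w) w = rev (subdiv_path w (next s w)).
  by rewrite /subdiv_path (subdiv_rev sd eww) rev_cons rev_rcons.
have : subdiv_path w (next s w) = rev s2 ++ y :: x :: rev s1.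
  by rewrite -[LHS]revK -hR hL rev_cat /= rev_cons rev_cons -!cats1 -!catA.
move=> hL'; rewrite hL' -catA in hr.
by rewrite (next_rot_cat2 uT hr) eqxx orbT.
Qed.

Lemma subdiv_path_sub_cycle s w u v z :
  graph_cycle eH s -> w \in s ->
  (u = w /\ v = next s w) \/ (u = next s w /\ v = w) ->
  z \in subdiv_path u v -> z \in subdiv_cycle s.
Proof.
move=> cs ws huv; have eww := graph_cycle_next cs ws.
have ws' : next s w \in s by rewrite mem_next.
rewrite inE mem_rcons inE => /or3P [/eqP ->|/eqP ->|zP].
- by case: huv => [[-> _]|[-> _]]; apply: subdiv_cycle_branch.
- by case: huv => [[_ ->]|[_ ->]]; apply: subdiv_cycle_branch.
case: huv zP => [[-> ->]|[-> ->]]; first exact: subdiv_cycle_interior.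
by rewrite (subdiv_rev sd eww) mem_rev; apply: subdiv_cycle_interior.
Qed.

Lemma subdiv_path_closed s x u v z :
  graph_cycle eH s -> x \in subdiv_cycle s -> eH u v -> x \in P u v ->
  z \in subdiv_path u v -> z \in subdiv_cycle s.
Proof.
move=> cs xT euv xP; have [w ws [hx|hx]] := mem_subdiv_cycle xT.
  by case/negP: (subdiv_branch sd euv xP w); rewrite hx.
apply: (subdiv_path_sub_cycle cs ws).
by case: (subdiv_interior sd euv (graph_cycle_next cs ws) xP hx) => [[-> ->]|[-> ->]];
  [left | right].
Qed.

Lemma subdiv_cycles_disjoint s1 s2 x y :
  graph_cycle eH s1 -> graph_cycle eH s2 -> [disjoint s1 & s2] ->
  x \in subdiv_cycle s1 -> y \in subdiv_cycle s2 -> x != y.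
Proof.
move=> c1 c2 dj xT yT; apply/eqP => exy; subst y.
have [w1 w1s h1] := mem_subdiv_cycle xT; have [w2 w2s h2] := mem_subdiv_cycle yT.
have e1 := graph_cycle_next c1 w1s; have e2 := graph_cycle_next c2 w2s.
have w1N z : z \in s2 -> z = w1 -> False.
  by move=> zs2 ez; rewrite -ez (disjointFl dj zs2) in w1s.
case: h1 => [hx1|hx1]; case: h2 => [hx2|hx2].
- by apply: (w1N w2 w2s); apply: (subdiv_inj sd); rewrite -hx1 -hx2.
- by case/negP: (subdiv_branch sd e2 hx2 w1); rewrite hx1.
- by case/negP: (subdiv_branch sd e1 hx1 w2); rewrite hx2.
have [[ew _]|[ew _]] := subdiv_interior sd e1 e2 hx1 hx2.
  exact: w1N w2s (esym ew).
by apply: (w1N (next s2 w2)); rewrite ?mem_next // ew.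
Qed.

Lemma subdiv_edge_interior x y : eG x y -> exists u v s1 s2,
  [/\ eH u v, x \in P u v & subdiv_path u v = s1 ++ x :: y :: s2] \/
  [/\ eH u v, y \in P u v & subdiv_path u v = s1 ++ y :: x :: s2].
Proof.
case/(subdiv_edge sd) => u [v [euv [s1 [s2 hL]]]].
have /orP [xP|yP] := consecutive_in_interior (subdiv_nil sd euv) hL.
  by exists u, v, s1, s2; left.
exists v, u, (rev s2), (rev s1); right; split.
- by rewrite eH_sym.
- by rewrite (subdiv_rev sd euv) mem_rev.
have : rev (subdiv_path u v) = rev (s1 ++ x :: y :: s2) by rewrite hL.
rewrite /subdiv_path (subdiv_rev sd euv) rev_cons rev_rcons rev_cat /=.
by rewrite rev_cons rev_cons -!cats1 -!catA.
Qed.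

Lemma induces_cycle_subdiv_cycle s :
  graph_cycle eH s -> induces_cycle eG (subdiv_cycle s).
Proof.
move=> cs; split; first exact: uniq_subdiv_cycle.
  have /and3P [_ ss _] := cs.
  by apply: (leq_trans ss); apply: size_flatten_map_ge.
move=> x y xT yT; apply/idP/idP.
  case/subdiv_edge_interior=> u [v [s1 [s2 [[euv xP hL]|[euv yP hL]]]]].
    exact: subdiv_cycle_path_consecutive cs xT euv xP hL.
  by rewrite orbC; exact: subdiv_cycle_path_consecutive cs yT euv yP hL.
case/orP => /eqP <-; first exact: subdiv_cycle_next_adj.
by rewrite eG_sym; exact: subdiv_cycle_next_adj.
Qed.

Lemma subdiv_cycles_nonadj s1 s2 x y :
  graph_cycle eH s1 -> graph_cycle eH s2 -> [disjoint s1 & s2] ->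
  x \in subdiv_cycle s1 -> y \in subdiv_cycle s2 -> ~~ eG x y.
Proof.
move=> c1 c2 dj xT yT; apply/negP.
case/subdiv_edge_interior=> u [v [t1 [t2 [[euv xP hL]|[euv yP hL]]]]].
  have yT1 : y \in subdiv_cycle s1.
    by apply: (subdiv_path_closed c1 xT euv xP); rewrite hL mem_cat !inE eqxx !orbT.
  by case/eqP: (subdiv_cycles_disjoint c1 c2 dj yT1 yT).
have xT2 : x \in subdiv_cycle s2.
  by apply: (subdiv_path_closed c2 yT euv yP); rewrite hL mem_cat !inE eqxx !orbT.
by rewrite disjoint_sym in dj; case/eqP: (subdiv_cycles_disjoint c2 c1 dj xT2 xT).
Qed.

Lemma has_induced_k_cycles_subdiv k (C : 'I_k -> seq VH) :
  (forall i, graph_cycle eH (C i)) -> (forall i j, i != j -> [disjoint C i & C j]) ->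
  has_induced_k_cycles eG k.
Proof.
move=> cC dC; exists (fun i => subdiv_cycle (C i)); split=> [i|i j ij x y xi yj].
  exact: induces_cycle_subdiv_cycle.
split; first exact: subdiv_cycles_disjoint (dC i j ij) xi yj.
exact: subdiv_cycles_nonadj (dC i j ij) xi yj.
Qed.

End InducedSubdividedCycles.

Lemma sum_deg_arcs (V : finType) (e : rel V) : \sum_(x : V) deg e x = arcs e setT.
Proof.
rewrite /arcs /deg; under [RHS]eq_bigl => x do rewrite in_setT.
apply: eq_bigr => x _; rewrite -sum1_card big_mkcond /=.
under [RHS]eq_bigl => y do rewrite in_setT.
by apply: eq_bigr => y _; rewrite inE; case: (e x y).
Qed.

Open Scope R_scope.

Lemma linear_le_klogk k : (2 <= k)%N -> INR (6 * k) <= 6 / ln 2 * INR k * ln (INR k).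
Proof.
move=> k2; rewrite mult_INR (_ : INR 6 = 6); last by rewrite /=; ring.
have ln2 : 0 < ln 2 by rewrite -ln_1; apply: ln_increasing; lra.
have K2 : 2 <= INR k by apply: (le_INR 2 k); apply/leP.
have lnk : ln 2 <= ln (INR k).
  by case: (Rle_lt_or_eq_dec _ _ K2) => [lt|<-]; [left; apply: ln_increasing|]; lra.
have -> : 6 * INR k = 6 / ln 2 * INR k * ln 2 by field; lra.
apply: Rmult_le_compat_l lnk; apply: Rmult_le_pos; last lra.
by apply: Rlt_le; apply: Rdiv_lt_0_compat; lra.
Qed.

Lemma avg_degree_ge (V : finType) (e : rel V) m : (0 < m)%N ->
  INR m <= avg_degree e -> (0 < #|V|)%N /\ (m * #|V| <= \sum_(x : V) deg e x)%N.
Proof.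
move=> m0; rewrite /avg_degree; have m0' : 0 < INR m by apply: lt_0_INR; apply/ltP.
case: (posnP #|V|) => [-> | V0]; first by rewrite Rdiv_0_r; lra.
have V0' : 0 < INR #|V| by apply: lt_0_INR; apply/ltP.
move=> /(Rmult_le_compat_r _ _ _ (Rlt_le _ _ V0')); rewrite /Rdiv Rmult_assoc Rinv_l; last lra.
by rewrite Rmult_1_r -mult_INR => /INR_le /leP.
Qed.

Close Scope R_scope.

Theorem mainTheorem12 :
  exists c : R, Rlt 0 c /\
    forall k : nat, (2 <= k)%N ->
    forall (VH : finType) (eH : rel VH) (VG : finType) (eG : rel VG),
      simple_graph eH -> simple_graph eG ->
      Rle (Rmult (Rmult c (INR k)) (ln (INR k))) (avg_degree eH) ->
      strict_subdivision eH eG ->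
      has_induced_k_cycles eG k.
Proof.
exists (Rdiv 6 (ln 2)); split.
  by apply: Rdiv_lt_0_compat; [lra | rewrite -ln_1; apply: ln_increasing; lra].
move=> k k2 VH eH VG eG [eH_sym eH_irr] [eG_sym _] avg /strict_subdivisionP [f [P sd]].
have [VH0 degH] := avg_degree_ge (m := 6 * k) ltac:(lia)
  (Rle_trans _ _ _ (linear_le_klogk k2) avg).
have VH0' : [set: VH] != set0 by rewrite -cards_eq0 cardsT -lt0n.
have arcsH : (6 * k.-1 + 2) * #|[set: VH]| <= arcs eH setT.
  by rewrite -sum_deg_arcs cardsT; apply: leq_trans degH; rewrite leq_mul2r; lia.
have [cs [szcs /allP csH pcs]] :=
  disjoint_cycles_of_arcs eH_sym (fun x => negbTE (eH_irr x)) VH0' arcsH.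
rewrite prednK ?(leq_trans _ k2) // in szcs.
apply: (has_induced_k_cycles_subdiv eH_sym eG_sym sd (C := fun i : 'I_k => nth [::] cs i)).
  move=> i; have ics : (i < size cs)%N by rewrite szcs.
  by case/andP: (csH _ (mem_nth [::] ics)).
move=> i j ij; apply: pairwise_sym_nth pcs _ _ ij; rewrite ?szcs ?ltn_ord //.
by move=> c d; rewrite disjoint_sym.
Qed.
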